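(* Let $\hat H,\hat H'$ be $p\times p$ transfer functions. Then $\hat H\sim\hat H'$ (shift equivalence) if and only if all of the following hold: (1) $\hat H_{ii}=\hat H'_{ii}$ for all $i$; (2) for all $i\neq j$, $\hat H_{ij}=0$ if and only if $\hat H'_{ij}=0$; (3) for all $i\ne j$ with $\hat H_{ij}\neq0$ there is an integer $b_{ij}$ with $\hat H'_{ij}(z)/\hat H_{ij}(z)=z^{b_{ij}}$; (4) the linear system $b_{ij}=m_j-m_i$ for all $i\neq j$ with $\hat H_{ij}\ne0$ has a solution $m\in\mathbb{R}^p$. Moreover, whenever this system has a real solution it has an integer solution.
   Context: For nonnegative integers $m=(m_1,\dots,m_p)$, the multi-shift is $\hat\Delta_m(z)=\mathrm{diag}(z^{-m_1},\dots,z^{-m_p})$. Two $p\times p$ transfer functions (matrices of rational functions of $z$) are shift-equivalent, $\hat H_1\sim\hat H_2$, if there is a multi-shift $\hat\Delta_m$ with $\hat H_1=\hat\Delta_m\hat H_2\hat\Delta_m^{-1}$. *)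

From HB Require Import structures.
From mathcomp Require Import all_boot all_order all_algebra fraction.
From mathcomp Require Import Rstruct.
Set Implicit Arguments. Unset Strict Implicit. Unset Printing Implicit Defensive.
Import Order.TTheory GRing.Theory Num.Theory.
Local Open Scope ring_scope.

Definition ratfun (F : fieldType) := {fraction {poly F}}.

Definition zvar (F : fieldType) : ratfun F := tofrac 'X.

Definition transfer (F : fieldType) (p : nat) := 'M[ratfun F]_p.

Definition multishift (F : fieldType) (p : nat) (m : 'I_p -> nat) : transfer F p :=
  diag_mx (\row_i (zvar F ^ (- (m i)%:Z))).

Definition shift_equiv (F : fieldType) (p : nat) (H1 H2 : transfer F p) : Prop :=
  exists m : 'I_p -> nat,
    H1 = @multishift F p m *m H2 *m invmx (@multishift F p m).

From HB Require Import structures.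
From mathcomp Require Import all_boot all_order all_algebra fraction.
From mathcomp Require Import Rstruct.
From mathcomp Require Import ring.
Import Order.TTheory GRing.Theory Num.Theory.
Local Open Scope ring_scope.

(* Conjugating by the multi-shift Delta_m multiplies entry (i, j) by z^(m_j - m_i),
   so shift equivalence means that the off-diagonal ratios H'_ij / H_ij are powers
   z^(b_ij) whose exponents form a gradient b_ij = u_j - u_i (with u = -m).  A real
   potential gives an integer one by taking floors, since u_j - u_i is an integer along
   every constraint; subtracting it from a large constant gives the nonnegative shift. *)

Lemma intr_sub_floor (R : archiRealDomainType) (k : int) (x y : R) :
  k%:~R = y - x -> k = Num.floor y - Num.floor x.
Proof.
move=> e; have -> : y = x + k%:~R by rewrite e addrC subrK.
by rewrite floorDrz ?intr_int // intrKfloor addrC addKr.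
Qed.

Lemma nat_potential_opp {p : nat} (u : 'I_p -> int) :
  exists n : 'I_p -> nat, forall i j, (n j)%:Z - (n i)%:Z = u i - u j.
Proof.
pose c : int := \sum_k `|u k|%:Z.
have c_ge k : u k <= c.
  rewrite /c (bigD1 k) //= abszE.
  by apply: le_trans (ler_wpDr (sumr_ge0 _ _) (ler_norm _)).
exists (fun k => `|c - u k|%N) => i j.
rewrite !abszE !ger0_norm ?subr_ge0 //; ring.
Qed.

Section MultiShift.

Variables (F : fieldType) (p : nat).

Lemma zvar_neq0 : zvar F != 0.
Proof. by rewrite /zvar tofrac_eq0 polyX_eq0. Qed.

Lemma invmx_multishift (m : 'I_p -> nat) :
  invmx (multishift F m) = diag_mx (\row_i (zvar F ^ (m i)%:Z)).
Proof.
set E := diag_mx _.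
have inv_diag (s : 'I_p -> int) :
    diag_mx (\row_i (zvar F ^ s i)) *m diag_mx (\row_i (zvar F ^ (- s i))) = 1%:M.
  rewrite mulmx_diag -diag_const_mx; congr diag_mx; apply/rowP => k.
  by rewrite !mxE -expfzDr ?zvar_neq0 // addrN.
have DE : multishift F m *m E = 1%:M.
  suff -> : E = diag_mx (\row_i (zvar F ^ (- - (m i)%:Z))) by apply: inv_diag.
  by congr diag_mx; apply/rowP => k; rewrite !mxE opprK.
have ED : E *m multishift F m = 1%:M by apply: inv_diag.
have U : multishift F m \in unitmx := intro_unitmx (conj ED DE).
by rewrite -[RHS](mulKmx U) DE mulmx1.
Qed.

Lemma multishift_conjE (m : 'I_p -> nat) (A : transfer F p) i j :
  (multishift F m *m A *m invmx (multishift F m)) i j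
  = zvar F ^ ((m j)%:Z - (m i)%:Z) * A i j.
Proof.
rewrite invmx_multishift /multishift mul_mx_diag mul_diag_mx !mxE.
by rewrite mulrC mulrA -expfzDr ?zvar_neq0 // addrC.
Qed.

Lemma shift_equivP (H H' : transfer F p) :
  shift_equiv H H' <->
  exists m : 'I_p -> nat,
    forall i j, H i j = zvar F ^ ((m j)%:Z - (m i)%:Z) * H' i j.
Proof.
split=> [[m ->] | [m hm]]; exists m; first exact: multishift_conjE.
by apply/matrixP => i j; rewrite hm multishift_conjE.
Qed.

Lemma shift_equiv_of_int_potential (H H' : transfer F p) (u : 'I_p -> int) :
  (forall i, H i i = H' i i) ->
  (forall i j, i != j -> (H i j == 0) = (H' i j == 0)) ->
  (forall i j, i != j -> H i j != 0 -> H' i j / H i j = zvar F ^ (u j - u i)) ->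
  shift_equiv H H'.
Proof.
move=> hd hz hu; have [n hn] := nat_potential_opp u.
apply/shift_equivP; exists n => i j; rewrite hn.
have [<-|ij] := eqVneq i j; first by rewrite subrr expr0z mul1r hd.
have [H0|Hn0] := eqVneq (H i j) 0.
  by move: (hz i j ij); rewrite H0 eqxx => /esym/eqP ->; rewrite mulr0.
rewrite -[H' i j](mulfVK Hn0) hu // mulrA -(expfzDr _ _ zvar_neq0).
by rewrite addrA subrK subrr expr0z mul1r.
Qed.

End MultiShift.

Theorem mainTheorem12 (F : fieldType) (p : nat) (H H' : transfer F p) :
  (shift_equiv H H' <->
    [/\ (forall i : 'I_p, H i i = H' i i),
        (forall i j : 'I_p, i != j -> (H i j == 0) = (H' i j == 0)) &
        exists b : 'I_p -> 'I_p -> int,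
          (forall i j : 'I_p, i != j -> H i j != 0 ->
              H' i j / H i j = zvar F ^ b i j) /\
          (exists m : 'I_p -> Rdefinitions.R,
              forall i j : 'I_p, i != j -> H i j != 0 ->
                (b i j)%:~R = m j - m i)])
  /\
  (forall b : 'I_p -> 'I_p -> int,
     (forall i j : 'I_p, i != j -> H i j != 0 ->
        H' i j / H i j = zvar F ^ b i j) ->
     (exists m : 'I_p -> Rdefinitions.R,
        forall i j : 'I_p, i != j -> H i j != 0 -> (b i j)%:~R = m j - m i) ->
     exists m : 'I_p -> int,
        forall i j : 'I_p, i != j -> H i j != 0 -> b i j = m j - m i).
Proof.
have z0 := zvar_neq0 F.
have integral b : (exists m : 'I_p -> Rdefinitions.R,
    forall i j, i != j -> H i j != 0 -> (b i j)%:~R = m j - m i) ->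
  exists m : 'I_p -> int, forall i j, i != j -> H i j != 0 -> b i j = m j - m i.
  case=> m hm; exists (fun i => Num.floor (m i)) => i j ij hij.
  by apply: intr_sub_floor; apply: hm.
split=> [|b _]; last exact: integral.
split=> [/shift_equivP [m hm] | [hd hz [b [hb /integral [u hu]]]]].
- have H'_eq0 i j : (H' i j == 0) = (H i j == 0).
    by rewrite hm mulf_eq0 (negPf (expfz_neq0 _ z0)).
  split=> [i|i j _|]; first by rewrite hm subrr expr0z mul1r.
    by rewrite H'_eq0.
  exists (fun i j => (m i)%:Z - (m j)%:Z); split.
    move=> i j _ hij; have H'ij : H' i j != 0 by rewrite H'_eq0.
    rewrite hm invfM mulrCA mulfV // mulr1.
    by rewrite invr_expz opprB.
  by exists (fun i => - ((m i)%:R : Rdefinitions.R)) => i j _ _; rewrite intrB opprK addrC.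
- apply: (@shift_equiv_of_int_potential F p H H' u hd hz) => i j ij hij.
  by rewrite hb // hu.
Qed.
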